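(* For a single parity-check (SPC) product code, the erasure probability of the first decoded information bit under successive cancellation (SC) decoding is equal to the erasure probability of each information bit under Elias' decoding.
   Context: Consider an $m$-dimensional $(n,k)$ systematic single parity-check (SPC) product code, i.e., a product code whose $\ell$-th component code, $\ell=1,\dots,m$, is an $(n_\ell,n_\ell-1)$ SPC code, so that $n=\prod_{\ell}n_\ell$ and $k=\prod_\ell (n_\ell-1)$. Transmission takes place over the binary erasure channel BEC($\epsilon_{\mathrm{ch}}$). The information bits are $u_1,\dots,u_k$. Under successive cancellation (SC) decoding, the bits are decoded in the order $i=1,\dots,k$, the decision on $u_i$ being based on the channel output and on the decisions for $u_1,\dots,u_{i-1}$ (the likelihoods are computed recursively over the dimensions, as for a polar code built from kernels whose first row is $(1,0,\dots,0)$ and whose remaining rows are $(1\,|\,\text{identity})$); over the BEC the decoder outputs an erasure in case of a tie. Under Elias' decoding, the product code is decoded as a serial concatenation, component codes of the first dimension first up to the last dimension in one sweep, and the likelihood of each $u_i$ is computed without using decisions on any other information bit (so all bits are decoded in parallel); over the BEC it also outputs an erasure on ties. With genie-aided knowledge of the preceding bits, the SC erasure probability $\epsilon^{(i)}_{\boldsymbol{G}^{[m]}}$ of bit $i$ obeys $\epsilon^{(i)}_{\boldsymbol{G}^{[m]}}=\epsilon^{(j+1)}_{\boldsymbol{G}^{[m-1]}}\bigl(1-(1-\epsilon^{(j+1)}_{\boldsymbol{G}^{[m-1]}})^{n_m-t}\bigr)$ with $j=\lfloor (i-1)/k_m\rfloor$, $t=((i-1)\bmod k_m)+1$, $k_m=n_m-1$,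 starting from $\epsilon_{\mathrm{ch}}$ at dimension $0$. *)

From HB Require Import structures.
From mathcomp Require Import all_boot all_order all_algebra.
Set Implicit Arguments. Unset Strict Implicit. Unset Printing Implicit Defensive.
Import Order.TTheory GRing.Theory Num.Theory.
Local Open Scope ring_scope.

(* Dimensions are indexed 0..m-1 (dimension l+1 of the paper is index l);
   the component code of index l is the (n l, n l - 1) SPC code.
   Information positions: all coordinates < n l - 1 (systematic part). *)
Definition Pos (m : nat) (n : nat -> nat) := {dffun forall l : 'I_m, 'I_(n l)}.

Definition info_pos m n (p : Pos m n) : bool :=
  [forall l : 'I_m, (val (p l) < (n l).-1)%N].

Definition same_line m n (l : 'I_m) (p q : Pos m n) : bool :=
  [forall l' : 'I_m, (l' != l) ==> (p l' == q l')].

(* One step of Elias' decoding over the BEC: all SPC component codes of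
   dimension l are decoded (APP/extrinsic, no use of other bit decisions);
   a symbol stays erased iff it was erased and some other symbol of its
   dimension-l line was erased. *)
Definition elias_step m n (l : 'I_m) (E : {set Pos m n}) : {set Pos m n} :=
  [set p in E | [exists q in E, (q != p) && same_line l p q]].

(* Elias' decoding: one sweep over dimensions 1..m; E = set of channel erasures;
   result = set of positions decoded as erasures. *)
Definition elias m n (E : {set Pos m n}) : {set Pos m n} :=
  foldl (fun E' l => elias_step l E') E (enum 'I_m).

Definition elias_erasure_prob (R : ringType) m n (eps : R) (p : Pos m n) : R :=
  \sum_(E : {set Pos m n} | p \in elias E)
     eps ^+ #|E| * (1 - eps) ^+ (#|{: Pos m n}| - #|E|).

(* Genie-aided SC erasure probability eps^{(i)}_{G^[m]} of bit i (1-based),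
   given by the recursion over dimensions, starting from eps at dimension 0. *)
Fixpoint sc_eps (R : ringType) (n : nat -> nat) (eps : R) (m i : nat) : R :=
  match m with
  | 0 => eps
  | m'.+1 =>
      let km := (n m').-1 in
      let j := ((i.-1) %/ km)%N in
      let t := (((i.-1) %% km).+1)%N in
      let e := sc_eps n eps m' j.+1 in
      e * (1 - (1 - e) ^+ (n m' - t))
  end.

From HB Require Import structures.
From mathcomp Require Import all_boot all_order all_algebra.
Import Order.TTheory GRing.Theory Num.Theory.
Set Implicit Arguments. Unset Strict Implicit. Unset Printing Implicit Defensive.
Local Open Scope ring_scope.

(* The first m sweeps of Elias' decoder act separately on the
   n_m slices with a fixed last coordinate, and the last sweep keeps a symbol
   erased iff it is erased in its own slice and in at least one of the n_m - 1
   other slices of its line. Channel erasures in distinct slices are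
   independent, so if every symbol is erased with probability e after m sweeps,
   it is erased with probability e (1 - (1 - e)^(n_m - 1)) after m + 1 sweeps:
   this is the SC recursion for the first bit (j = 0, t = 1). *)

Definition bec_weight (R : nzRingType) (T : finType) (eps : R) (E : {set T}) : R :=
  \prod_(t : T) (if t \in E then eps else 1 - eps).

Section BecWeight.
Variables (R : comNzRingType) (T : finType) (eps : R).

Lemma bec_weightE (E : {set T}) :
  eps ^+ #|E| * (1 - eps) ^+ (#|{: T}| - #|E|) = bec_weight eps E.
Proof.
rewrite /bec_weight (bigID (mem E)) /=.
rewrite (eq_bigr (fun=> eps)) => [|t ->//]; rewrite prodr_const.
rewrite (eq_bigr (fun=> 1 - eps)) => [|t /negbTE ->//].
rewrite (eq_bigl [predC E]) => [|t]; last by rewrite inE.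
by rewrite prodr_const -(cardC E) addKn.
Qed.

Lemma sum_bec_weight : \sum_(E : {set T}) bec_weight eps E = 1.
Proof. by rewrite -bigA_distr big1 // => t _; exact: subrKC. Qed.

Lemma sum_bec_weight_mem (t0 : T) :
  \sum_(E : {set T} | t0 \in E) bec_weight eps E = eps.
Proof.
pose erased_else t := if t == t0 then 0 else 1 - eps.
have prod_eps : \prod_t (eps + erased_else t) = eps.
  rewrite (bigD1 t0) //= /erased_else eqxx addr0 big1 ?mulr1 //.
  by move=> t /negbTE ->; rewrite subrKC.
rewrite -[RHS]prod_eps bigA_distr big_mkcond; apply: eq_big => // E _.
rewrite /bec_weight (bigD1 t0) //= [in RHS](bigD1 t0) //= /erased_else eqxx.
case: (t0 \in E); last by rewrite !mul0r.
by congr (_ * _); apply: eq_bigr => t /negbTE ->.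
Qed.

End BecWeight.

Lemma prod_if_eq (R : comNzRingType) (I : finType) (i0 : I) (x y : R) :
  \prod_i (if i == i0 then x else y) = x * y ^+ #|I|.-1.
Proof.
rewrite (bigD1 i0) //= eqxx (eq_bigr (fun=> y)) => [|i /negbTE -> //].
by rewrite prodr_const cardC1.
Qed.

Lemma prod_if0 (R : comNzRingType) (I : finType) (P : pred I) (f : I -> R) :
  \prod_i (if P i then f i else 0) = if [forall i, P i] then \prod_i f i else 0.
Proof.
case: (boolP [forall i, P i]) => [/forallP allP | /forallPn [i /negbTE Pi]].
  by apply: eq_bigr => i _; rewrite allP.
by rewrite (bigD1 i) //= Pi mul0r.
Qed.

Lemma sum_prod_mem_and_other (R : comNzRingType) (I T : finType)
    (w : T -> R) (a : pred T) (i0 : I) :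
  \sum_x w x = 1 ->
  \sum_(X : {ffun I -> T} | a (X i0) && [exists i, (i != i0) && a (X i)])
     \prod_i w (X i)
  = (\sum_(x | a x) w x) * (1 - (1 - \sum_(x | a x) w x) ^+ #|I|.-1).
Proof.
move=> w_sum1; set e := \sum_(x | a x) w x.
have sum_notin : \sum_(x | ~~ a x) w x = 1 - e.
  by rewrite -w_sum1 [in RHS](bigID a) /= -/e addrAC subrr add0r.
(* The event is [forall i, Pin i (X i)] minus [forall i, Pout i (X i)], and
   both are product events. *)
pose Pin i x := (i == i0) ==> a x.
pose Pout i x := (i == i0) == a x.
have sum_Pin i : \sum_x (if Pin i x then w x else 0) = if i == i0 then e else 1.
  by rewrite -big_mkcond /Pin; case: (i == i0).
have sum_Pout i : \sum_x (if Pout i x then w x else 0) = if i == i0 then e else 1 - e.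
  rewrite -big_mkcond /Pout.
  by case: (i == i0); rewrite -?sum_notin; apply: eq_bigl => x; case: (a x).
have split_event (X : {ffun I -> T}) :
    (if a (X i0) && [exists i, (i != i0) && a (X i)] then \prod_i w (X i) else 0)
    = \prod_i (if Pin i (X i) then w (X i) else 0)
      - \prod_i (if Pout i (X i) then w (X i) else 0).
  rewrite !prod_if0.
  have -> : [forall i, Pin i (X i)] = a (X i0).
    apply/forallP/idP => [/(_ i0)|aX0 i]; rewrite /Pin ?eqxx //.
    by apply/implyP => /eqP ->.
  have -> : [forall i, Pout i (X i)] = a (X i0) && ~~ [exists i, (i != i0) && a (X i)].
    rewrite negb_exists; apply/forallP/andP => [all_out|[aX0 /forallP none] i].
      split; first by have := all_out i0; rewrite /Pout eqxx => /eqP.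
      apply/forallP => i; apply/negP => /andP [i_ne aXi].
      by have := all_out i; rewrite /Pout (negbTE i_ne) aXi.
    rewrite /Pout; have [->|i_ne] := eqVneq i i0; first by rewrite aX0.
    by have := none i; rewrite i_ne /= => /negbTE ->.
  by case: (a (X i0)); case: existsP; rewrite ?subr0 ?subrr.
rewrite big_mkcond (eq_bigr _ (fun X _ => split_event X)) sumrB.
rewrite -(bigA_distr_bigA (fun i x => if Pin i x then w x else 0)).
rewrite -(bigA_distr_bigA (fun i x => if Pout i x then w x else 0)).
rewrite (eq_bigr _ (fun i _ => sum_Pin i)) (eq_bigr _ (fun i _ => sum_Pout i)).
by rewrite !prod_if_eq expr1n mulr1 mulrBr mulr1.
Qed.

Definition pos_init m n (p : Pos m.+1 n) : Pos m n :=
  @finfun _ (fun l : 'I_m => 'I_(n l)) (fun l => p (widen_ord (leqnSn m) l)).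

Definition pos_last m n (p : Pos m.+1 n) : 'I_(n m) := p ord_max.

Definition pos_split m n (p : Pos m.+1 n) := (pos_init p, pos_last p).

Lemma ord_widen_max_ind m (P : 'I_m.+1 -> Prop) :
  (forall j : 'I_m, P (widen_ord (leqnSn m) j)) -> P ord_max -> forall l, P l.
Proof.
move=> P_widen P_max l; case: (unliftP ord_max l) => [j ->|-> //].
by have -> : lift ord_max j = widen_ord (leqnSn m) j by apply: val_inj; exact: lift_max.
Qed.

Lemma card_PosS m n : #|{: Pos m.+1 n}| = (#|{: Pos m n}| * n m)%N.
Proof.
rewrite !card_dep_ffun /image_mem enum_ordSr map_rcons -map_comp foldr_rcons.
rewrite card_ord muln1.
by elim: (enum 'I_m) => [|l s IH] /=; rewrite ?mul1n // IH mulnA.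
Qed.

Lemma pos_split_inj m n : injective (@pos_split m n).
Proof.
move=> p p' [/ffunP eq_init eq_last]; apply/ffunP.
apply: ord_widen_max_ind => [j|//].
by have := eq_init j; rewrite !ffunE.
Qed.

(* Counting avoids writing the inverse, which would need a cast from
   ['I_(n j)] to ['I_(n l)] along a propositional equality [j = l :> nat]. *)
Lemma pos_split_bij m n : bijective (@pos_split m n).
Proof.
apply: inj_card_bij; first exact: pos_split_inj.
by rewrite card_prod card_PosS card_ord.
Qed.

Lemma same_line_widen m n (l : 'I_m) (p q : Pos m.+1 n) :
  same_line (widen_ord (leqnSn m) l) p q =
  same_line l (pos_init p) (pos_init q) && (pos_last p == pos_last q).
Proof.
apply/forallP/andP => [on_line | [/forallP init_on_line /eqP eq_last]].
  split; last first.
    by apply: (implyP (on_line ord_max)); rewrite -val_eqE /= neq_ltn ltn_ord orbT.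
  apply/forallP => l'; apply/implyP => l'_ne; rewrite !ffunE.
  by apply: (implyP (on_line _)); rewrite -val_eqE.
apply: ord_widen_max_ind => [j|]; apply/implyP => j_ne; last exact/eqP.
by have := implyP (init_on_line j); rewrite !ffunE; apply; rewrite -val_eqE.
Qed.

Lemma same_line_max m n (p q : Pos m.+1 n) :
  same_line ord_max p q = (pos_init p == pos_init q).
Proof.
apply/forallP/eqP => [on_line | /ffunP eq_init].
  apply/ffunP => j; rewrite !ffunE; apply/eqP.
  by apply: (implyP (on_line _)); rewrite -val_eqE /= neq_ltn ltn_ord.
apply: ord_widen_max_ind => [j|]; apply/implyP; last by rewrite eqxx.
by move=> _; have := eq_init j; rewrite !ffunE => ->.
Qed.

Definition stack m n (X : {ffun 'I_(n m) -> {set Pos m n}}) : {set Pos m.+1 n} :=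
  [set p | pos_init p \in X (pos_last p)].

Definition elias_sweep m n (ls : seq 'I_m) (E : {set Pos m n}) : {set Pos m n} :=
  foldl (fun E' l => elias_step l E') E ls.

Section Stack.
Variables (m : nat) (n : nat -> nat) (pos_join : Pos m n * 'I_(n m) -> Pos m.+1 n).
Hypotheses (pos_splitK : cancel (@pos_split m n) pos_join)
           (pos_joinK : cancel pos_join (@pos_split m n)).

Lemma pos_init_join x : pos_init (pos_join x) = x.1.
Proof. by rewrite -[in RHS](pos_joinK x). Qed.

Lemma pos_last_join x : pos_last (pos_join x) = x.2.
Proof. by rewrite -[in RHS](pos_joinK x). Qed.

Lemma stack_bij : bijective (@stack m n).
Proof.
pose slices (E : {set Pos m.+1 n}) : {ffun 'I_(n m) -> {set Pos m n}} :=
  [ffun c => [set q | pos_join (q, c) \in E]].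
exists slices.
  move=> X; apply/ffunP => c; apply/setP => q.
  by rewrite ffunE !inE pos_init_join pos_last_join.
move=> E; apply/setP => p; rewrite !inE ffunE inE.
by rewrite -[pos_join _]/(pos_join (pos_split p)) pos_splitK.
Qed.

Lemma elias_step_stack_widen l (X : {ffun 'I_(n m) -> {set Pos m n}}) :
  elias_step (widen_ord (leqnSn m) l) (stack X) =
  stack [ffun c => elias_step l (X c)].
Proof.
apply/setP => p; rewrite /elias_step !inE ffunE inE.
case: (pos_init p \in X (pos_last p)) => //=.
apply/existsP/existsP => [[q /and3P [q_in q_ne]] | [q /and3P [q_in q_ne on_line]]].
  rewrite inE in q_in; rewrite same_line_widen => /andP [on_line /eqP eq_last].
  exists (pos_init q); rewrite eq_last q_in on_line andbT /=.
  apply: contra q_ne => /eqP eq_init; apply/eqP/pos_split_inj.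
  by rewrite /pos_split eq_init eq_last.
exists (pos_join (q, pos_last p)).
rewrite inE same_line_widen pos_init_join pos_last_join q_in on_line eqxx /= andbT.
by apply: contra q_ne => /eqP <-; rewrite pos_init_join.
Qed.

Lemma mem_elias_step_stack_max p (X : {ffun 'I_(n m) -> {set Pos m n}}) :
  (p \in elias_step ord_max (stack X)) =
  (pos_init p \in X (pos_last p)) &&
  [exists c, (c != pos_last p) && (pos_init p \in X c)].
Proof.
rewrite /elias_step !inE; congr andb.
apply/existsP/existsP => [[q /and3P [q_in q_ne]] | [c /andP [c_ne c_in]]].
  rewrite inE in q_in; rewrite same_line_max => /eqP eq_init.
  exists (pos_last q); rewrite eq_init q_in andbT.
  apply: contra q_ne => /eqP eq_last; apply/eqP/pos_split_inj.
  by rewrite /pos_split eq_init eq_last.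
exists (pos_join (pos_init p, c)).
rewrite inE same_line_max pos_init_join pos_last_join c_in eqxx /= andbT.
by apply: contra c_ne => /eqP <-; rewrite pos_last_join.
Qed.

Lemma elias_sweep_stack (ls : seq 'I_m) (X : {ffun 'I_(n m) -> {set Pos m n}}) :
  elias_sweep (map (widen_ord (leqnSn m)) ls) (stack X) =
  stack [ffun c => elias_sweep ls (X c)].
Proof.
elim: ls X => [|l ls IH] X; first by congr stack; apply/ffunP => c; rewrite ffunE.
rewrite /elias_sweep /= elias_step_stack_widen -/(elias_sweep _ _) IH.
by congr stack; apply/ffunP => c; rewrite !ffunE.
Qed.

Lemma mem_elias_stack p (X : {ffun 'I_(n m) -> {set Pos m n}}) :
  (p \in elias (stack X)) =
  (pos_init p \in elias (X (pos_last p))) &&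
  [exists c, (c != pos_last p) && (pos_init p \in elias (X c))].
Proof.
rewrite /elias enum_ordSr foldl_rcons -/(elias_sweep _ _) elias_sweep_stack.
by rewrite mem_elias_step_stack_max !ffunE; under eq_existsb => c do rewrite ffunE.
Qed.

Lemma bec_weight_stack (R : comNzRingType) (eps : R)
    (X : {ffun 'I_(n m) -> {set Pos m n}}) :
  bec_weight eps (stack X) = \prod_(c : 'I_(n m)) bec_weight eps (X c).
Proof.
rewrite /bec_weight (reindex pos_join); last by apply: onW_bij; exists (@pos_split m n).
rewrite (eq_bigr (fun x => if x.1 \in X x.2 then eps else 1 - eps)); last first.
  by move=> x _; rewrite inE pos_init_join pos_last_join.
by rewrite exchange_big pair_bigA.
Qed.

End Stack.

Lemma elias0 n (E : {set Pos 0 n}) : elias E = E.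
Proof. by rewrite /elias enum_ord0. Qed.

Lemma sum_bec_weight_elias (R : comNzRingType) (n : nat -> nat) (eps : R)
    m (p : Pos m n) :
  \sum_(E : {set Pos m n} | p \in elias E) bec_weight eps E = sc_eps n eps m 1.
Proof.
elim: m p => [|m IH] p.
  by under eq_bigl => E do rewrite elias0; exact: sum_bec_weight_mem.
have [pos_join pos_splitK pos_joinK] := pos_split_bij m n.
rewrite (reindex (@stack m n)) /=; last exact/onW_bij/(stack_bij pos_splitK pos_joinK).
under eq_bigl => X do rewrite (mem_elias_stack pos_joinK).
under eq_bigr => X _ do rewrite (bec_weight_stack pos_splitK pos_joinK).
rewrite (sum_prod_mem_and_other (fun Y => pos_init p \in elias Y) _
          (sum_bec_weight _ eps)).
by rewrite IH card_ord div0n mod0n subn1.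
Qed.

Theorem lemma3 (R : realFieldType) (m : nat) (n : nat -> nat)
  (hm : (0 < m)%N) (hn : forall l : nat, (l < m)%N -> (2 <= n l)%N)
  (eps : R) (heps0 : 0 <= eps) (heps1 : eps <= 1)
  (p : Pos m n) (hp : info_pos p) :
  elias_erasure_prob eps p = sc_eps n eps m 1.
Proof.
rewrite /elias_erasure_prob -(sum_bec_weight_elias eps p).
by apply: eq_bigr => E _; rewrite bec_weightE.
Qed.
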